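(* Let $\mathcal E$ be any partition of $E^1$ into nonempty parts. Then $$\sum_{\{U,W\}\in\mathsf P_2}\operatorname{sgn}_{\mathcal E}\prod_{i=1}^{|\mathcal E|}\chi^{\mathsf u_i,\mathsf v_i}=(-1)^{1-|\mathcal E|}(-\Psi)^{|\mathcal E|-N}\sum_{D\in\mathcal D^0|_{\mathcal E}}(-2)^{c_2^2(D)-1}\prod_{(a,b)\text{ chord of }D}\chi^{a,b}.$$
   Context: Graph polynomials. All graphs are finite, may have multiple edges and self-loops, and each edge $e$ has a fixed direction from $\partial_-(e)$ to $\partial_+(e)$. Each edge $e$ carries a variable $\alpha_e$; for $S\subseteq E_G$ put $\alpha_S=\prod_{e\in S}\alpha_e$. $h_1(G)$ is the first Betti number. The Kirchhoff polynomial of a connected graph is $\Psi_G=\sum_T\alpha_{E_G\setminus T}$, summed over spanning trees $T$; for a disconnected graph it is the product over its components. $G/\!\!/S$ denotes contraction of all edges of $S$. A simple cycle $C$ is a connected subgraph in which every vertex has degree $2$; fix one of its two cyclic orientations and set $o_C(e)=+1$ if $e\in C$ is directed along it, $-1$ if against it, and $0$ if $e\notin C$. For $e,f\in E_G$ the cycle polynomial is $\chi_G^{e,f}=\sum_C o_C(e)o_C(f)\Psi_{G/\!\!/C}$, summed over all simple cycles $C$. For words $\mathsf u=u_1\cdots u_k$ and $\mathsf v=v_1\cdots v_k$ whose letters are edges of $G$, with $1\le k\le h_1(G)$, the Dodgson cycle polynomial is $\chi_G^{\mathsf u,\mathsf v}=\Psi_G^{1-k}\sum_{\sigma\in S_k}\operatorname{sgn}(\sigma)\prod_{i=1}^k\chi_G^{u_i,v_{\sigma(i)}}=\Psi_G^{1-k}\det(\chi_G^{u_i,v_j})_{i,j}$.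 Chord diagrams. Let $\Gamma$ be a connected graph with $N:=h_1(\Gamma)\ge1$, and write $\Psi=\Psi_\Gamma$, $\chi^{e,f}=\chi_\Gamma^{e,f}$, $\chi^{\mathsf u,\mathsf v}=\chi_\Gamma^{\mathsf u,\mathsf v}$. Let $D_0$ be a chord diagram without chords: a disjoint union of $\ell\ge1$ cycles (base cycles) of lengths $2n_1,\dots,2n_\ell$, with $n_i\ge1$ and $\sum n_i=N$. A base cycle of length $2$ consists of two parallel edges. Its edges (base edges) are coloured $1$ and $2$ alternately along each base cycle, so every vertex meets exactly one base edge of each colour. Its $2N$ vertices are labelled by pairwise distinct edges of $\Gamma$; $e_w$ denotes the label of vertex $w$. Let $E^1$ and $E^2$ be the sets of base edges of colour $1$ and $2$; each is a perfect matching of $V(D_0)$. A chord is an extra edge (colour $0$) joining two distinct vertices. $\mathcal D^0$ is the set of diagrams obtained from $D_0$ by adding $N$ chords forming a perfect matching of $V(D_0)$. For $D\in\mathcal D^0$, $c_2^2(D)$ is the number of connected components that are cycles in the subgraph formed by all chords and all colour-$2$ base edges (a chord parallel to a colour-$2$ base edge counts as a cycle of length $2$). For a chord $(a,b)$ write $\chi^{a,b}:=\chi^{e_a,e_b}$. Words. $\mathsf P_2$ is the set of unordered pairs $\{U,W\}$ of disjoint sets with $U\cup W=V(D_0)$ and $|U|=|W|=N$, such that every colour-$2$ base edge has one endpoint in $U$ and one in $W$. Fix an enumeration $(a_1,b_1),\dots,(a_N,b_N)$ of $E^2$. The representative of $\{U,W\}$ is the pair of words $(\mathsf u_{\rm id},\mathsf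 v_{\rm id})$ of length $N$ whose $k$-th letters are $e_{a_k}$ and $e_{b_k}$: the letter whose vertex lies in $U$ goes into $\mathsf u_{\rm id}$ and the other into $\mathsf v_{\rm id}$. Partitions. Let $\mathcal E=\{E_1,\dots,E_m\}$ be a partition of $E^1$ into $m=|\mathcal E|$ nonempty parts, listed in any order, and let $V_i$ be the set of endpoints of edges of $E_i$. For $\{U,W\}\in\mathsf P_2$ with representative $(\mathsf u_{\rm id},\mathsf v_{\rm id})$, let $\mathsf u_i$ (resp. $\mathsf v_i$) be the subword of $\mathsf u_{\rm id}$ (resp. $\mathsf v_{\rm id}$) consisting of the letters $e_w$ with $w\in V_i$, in their original order. - If $|\mathsf u_i|=|\mathsf v_i|$ for all $i$, set $\operatorname{sgn}_{\mathcal E}=\operatorname{sgn}(\sigma)\operatorname{sgn}(\sigma')$, where $\sigma,\sigma'\in S_N$ are the permutations of letter positions with $\mathsf u_1\cdots\mathsf u_m=\sigma(\mathsf u_{\rm id})$ and $\mathsf v_1\cdots\mathsf v_m=\sigma'(\mathsf v_{\rm id})$. - Otherwise set $\operatorname{sgn}_{\mathcal E}=0$, and the corresponding summand is $0$. $\mathcal D^0|_{\mathcal E}$ is the set of $D\in\mathcal D^0$ all of whose chords join two vertices lying in the same $V_i$. *)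

From HB Require Import structures.
From mathcomp Require Import all_boot all_order all_algebra all_fingroup.
Set Implicit Arguments. Unset Strict Implicit. Unset Printing Implicit Defensive.
Import GRing.Theory.
Local Open Scope ring_scope.

(* Graphs: vertex type V, edge type E, each edge e directed from       *)
(* src e to tgt e (multiple edges and self-loops allowed).  A          *)
(* subgraph / graph on the same vertex type is given by an edge set S. *)
Section Graph.
Variables (V E : finType) (src tgt : E -> V).

Definition adj (S : {set E}) : rel V := fun u v =>
  [exists e in S, ((src e == u) && (tgt e == v)) || ((src e == v) && (tgt e == u))].

Definition is_endpoint (S : {set E}) (v : V) : bool :=
  [exists e in S, (src e == v) || (tgt e == v)].

(* degree in the subgraph S (a self-loop counts twice) *)
Definition degree (S : {set E}) (v : V) : nat :=
  (#|[set e in S | src e == v]| + #|[set e in S | tgt e == v]|)%N.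

Definition simple_cycle (C : {set E}) : bool :=
  [&& C != set0,
      [forall v, is_endpoint C v ==> (degree C v == 2%N)] &
      [forall u, forall v, (is_endpoint C u && is_endpoint C v) ==> connect (adj C) u v]].

Definition acyclic (T : {set E}) : bool :=
  [forall C : {set E}, (C \subset T) ==> ~~ simple_cycle C].

Definition spanning_forest (S T : {set E}) : bool :=
  [&& T \subset S, acyclic T &
      [forall u, forall v, connect (adj S) u v ==> connect (adj T) u v]].

(* Kirchhoff polynomial (evaluated at alpha); for a disconnected graph  *)
(* this is the product over components of the spanning-tree sums.       *)
Definition kirchhoff (R : comNzRingType) (alpha : E -> R) (S : {set E}) : R :=
  \sum_(T : {set E} | spanning_forest S T) \prod_(e in S :\: T) alpha e.

Definition ncomp (S : {set E}) : nat :=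
  #|[set [set y | connect (adj S) x y] | x : V]|.

Definition betti1 : nat := (#|E| + ncomp setT - #|V|)%N.

Definition connected_graph : bool :=
  [forall u, forall v, connect (adj setT) u v].

Definition cyc_orientation (C : {set E}) (o : {ffun E -> bool}) : bool :=
  [forall v, is_endpoint C v ==>
     (#|[set e in C | (if o e then src e else tgt e) == v]| == 1%N) &&
     (#|[set e in C | (if o e then tgt e else src e) == v]| == 1%N)].

Definition orient_of (C : {set E}) : {ffun E -> bool} :=
  odflt [ffun => true] [pick o | cyc_orientation C o].

Definition ocyc (R : nzRingType) (C : {set E}) (e : E) : R :=
  if e \in C then (if orient_of C e then 1 else -1) else 0.
End Graph.

(* vertex map of the contraction G//C: each vertex goes to the root of *)
(* its connected component in the subgraph C                           *)
Definition contr_map (V E : finType) (src tgt : E -> V) (C : {set E}) : V -> V :=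
  fingraph.root (adj src tgt C).

Definition kirchhoff_contr (V E : finType) (src tgt : E -> V) (R : comNzRingType)
  (alpha : E -> R) (C : {set E}) : R :=
  kirchhoff (contr_map src tgt C \o src) (contr_map src tgt C \o tgt) alpha (~: C).

Definition Psi (V E : finType) (src tgt : E -> V) (R : comNzRingType) (alpha : E -> R) : R :=
  kirchhoff src tgt alpha setT.

Definition cyclepoly (V E : finType) (src tgt : E -> V) (R : comNzRingType)
  (alpha : E -> R) (e f : E) : R :=
  \sum_(C : {set E} | simple_cycle src tgt C)
     ocyc src tgt R C e * ocyc src tgt R C f * kirchhoff_contr src tgt alpha C.

Definition dodgson (V E : finType) (src tgt : E -> V) (R : fieldType)
  (alpha : E -> R) (u v : seq E) : R :=
  let rows := [seq [seq cyclepoly src tgt alpha x y | y <- v] | x <- u] in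
  Psi src tgt alpha ^ (1 - (size u)%:Z) *
  \det (\matrix_(i < size u, j < size u) nth 0 (nth [::] rows i) j).

Definition perfect_matching (W : finType) (M : {set {set W}}) : bool :=
  partition M [set: W] && [forall B in M, #|B| == 2%N].

Section Chords.
Variables (W : finType) (N : nat) (a b : 'I_N -> W) (E1 E2 : {set {set W}}).

(* P_2, as a set of unordered pairs {U, ~: U} *)
Definition P2 : {set {set {set W}}} :=
  [set p : {set {set W}} | [exists U : {set W},
     [&& p == [set U; ~: U], #|U| == N, #|~: U| == N &
         [forall e in E2, #|e :&: U| == 1%N]]]].

Definition pair_U (p : {set {set W}}) : {set W} := odflt set0 [pick X in p].

Definition uvert (U : {set W}) (k : 'I_N) : W := if a k \in U then a k else b k.
Definition vvert (U : {set W}) (k : 'I_N) : W := if a k \in U then b k else a k.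

(* positions (in u_id, resp. v_id) of the letters of u_i, resp. v_i, *)
(* where V_i = cover B                                               *)
Definition upos (U : {set W}) (B : {set {set W}}) : seq 'I_N :=
  [seq k <- enum 'I_N | uvert U k \in cover B].
Definition vpos (U : {set W}) (B : {set {set W}}) : seq 'I_N :=
  [seq k <- enum 'I_N | vvert U k \in cover B].

Definition seq_sign (R : nzRingType) (s : seq 'I_N) : R :=
  match [pick sg : 'S_N | [forall i : 'I_N, nth i s i == sg i]] with
  | Some sg => (-1) ^+ odd_perm sg
  | None => 0
  end.

(* sgn_E for the partition P (parts listed as enum P) *)
Definition sgnE (R : nzRingType) (P : {set {set {set W}}}) (U : {set W}) : R :=
  if [forall B in P, size (upos U B) == size (vpos U B)] then
    seq_sign R (flatten [seq upos U B | B <- enum P]) *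
    seq_sign R (flatten [seq vpos U B | B <- enum P])
  else 0.

(* c_2^2(D) for the chord set M: components of (W, M + E2) that are     *)
(* cycles, i.e. connected with every vertex of degree 2                  *)
Definition chord2_rel (M : {set {set W}}) : rel W := fun x y =>
  [exists c in M :|: E2, (x \in c) && (y \in c)].

Definition c22 (M : {set {set W}}) : nat :=
  #|[set K in [set [set y | connect (chord2_rel M) x y] | x : W] |
     [forall x in K, (#|[set c in M | x \in c]| + #|[set c in E2 | x \in c]|)%N == 2%N]]|.
End Chords.

Definition chord_chi (V E : finType) (src tgt : E -> V) (R : comNzRingType)
  (alpha : E -> R) (W : finType) (lab : W -> E) (c : {set W}) : R :=
  match [pick x in c] with
  | Some x => match [pick y in c :\ x] with
              | Some y => cyclepoly src tgt alpha (lab x) (lab y)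
              | None => 0 end
  | None => 0
  end.

From HB Require Import structures.
From mathcomp Require Import all_boot all_order all_algebra all_fingroup.
From mathcomp Require Import ring.
Set Implicit Arguments. Unset Strict Implicit. Unset Printing Implicit Defensive.
Import GRing.Theory.
Local Open Scope ring_scope.

(* Only the symmetry chi^{e,f} = chi^{f,e} of the cycle polynomial enters,  *)
(* so the identity holds for any symmetric weight X on the vertices of D_0.  *)
(* Fix U, one endpoint of each colour-2 edge.  Up to the two signs of sgn_E, *)
(* the product of the Dodgson polynomials is Psi^(|E|-N) times the          *)
(* determinant of the N x N matrix X(u_k, v_l), with the entries joining     *)
(* different parts set to 0: after permuting rows and columns this matrix   *)
(* is block diagonal.  In its Leibniz expansion a permutation s contributes  *)
(* the chord diagram {u_k, v_(s k)}, whose chords stay within parts and     *)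
(* cross U; the cycles of s are those of the chords together with the       *)
(* colour-2 edges, so sgn s = (-1)^(N + c_2^2).  Exchanging the sums, a     *)
(* diagram D is counted once per pair {U, W} that both its chords and the   *)
(* colour-2 edges cross, i.e. per proper 2-colouring, up to swap, of the    *)
(* union of its even cycles: 2^(c_2^2(D) - 1) times.                        *)

Lemma cards2I_eq1 (T : finType) (x y : T) (U : {set T}) : x != y ->
  (#|[set x; y] :&: U| == 1%N) = ((x \in U) != (y \in U)).
Proof.
move=> nxy.
have -> : [set x; y] :&: U =
    (if x \in U then [set x] else set0) :|: (if y \in U then [set y] else set0).
  apply/setP => z; rewrite !inE.
  have [zx|nzx] := eqVneq z x; have [zy|nzy] := eqVneq z y.
  - by move: nxy; rewrite -zx -zy eqxx.
  - by rewrite zx; case: (x \in U); case: (y \in U); rewrite !inE ?eqxx ?(negbTE nxy).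
  - by rewrite zy; case: (x \in U); case: (y \in U); rewrite !inE ?eqxx // eq_sym (negbTE nxy).
  - by case: (x \in U); case: (y \in U); rewrite !inE ?(negbTE nzx) ?(negbTE nzy).
case xU: (x \in U); case yU: (y \in U) => /=.
- by rewrite cards2 nxy.
- by rewrite setU0 cards1.
- by rewrite set0U cards1.
- by rewrite setU0 cards0.
Qed.

Section PerfectMatching.
Variables (W : finType) (Q : {set {set W}}).

Definition partner (x : W) : W := odflt x [pick y in pblock Q x :\ x].

Definition pm_transversal (U : {set W}) : bool := [forall c in Q, #|c :&: U| == 1%N].

Hypothesis HQ : perfect_matching Q.

Lemma pm_trivIset : trivIset Q.
Proof. by case/andP: HQ => /and3P[]. Qed.

Lemma pm_card2 c : c \in Q -> #|c| = 2%N.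
Proof. by case/andP: HQ => _ /forall_inP H /H /eqP. Qed.

Lemma pm_pblock x : pblock Q x \in Q.
Proof. by apply: pblock_mem; case/andP: HQ => /and3P[/eqP -> _ _]. Qed.

Lemma pm_mem_pblock x : x \in pblock Q x.
Proof. by rewrite mem_pblock; case/andP: HQ => /and3P[/eqP -> _ _]. Qed.

Lemma pm_pblockE c x : c \in Q -> x \in c -> pblock Q x = c.
Proof. exact: def_pblock pm_trivIset. Qed.

Lemma partner_spec x : partner x \in pblock Q x :\ x.
Proof.
rewrite /partner; case: pickP => [y -> //|none] /=.
by have := pm_card2 (pm_pblock x); rewrite (cardsD1 x) pm_mem_pblock (eq_card0 none).
Qed.

Lemma partner_neq x : partner x != x.
Proof. by have := partner_spec x; rewrite !inE => /andP[]. Qed.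

Lemma partner_in x : partner x \in pblock Q x.
Proof. by have := partner_spec x; rewrite !inE => /andP[]. Qed.

Lemma pblock_pair x : pblock Q x = [set x; partner x].
Proof.
apply/eqP; rewrite eq_sym eqEcard pm_card2 ?pm_pblock // cards2 eq_sym partner_neq.
by rewrite andbT subUset !sub1set pm_mem_pblock partner_in.
Qed.

Lemma pblock_partner x : pblock Q (partner x) = pblock Q x.
Proof. exact: pm_pblockE (pm_pblock x) (partner_in x). Qed.

Lemma partnerK : involutive partner.
Proof.
move=> x; have := partner_in (partner x).
rewrite pblock_partner pblock_pair !inE => /orP[] /eqP // xx'.
by have := partner_neq (partner x); rewrite xx' eqxx.
Qed.

Lemma partner_inj : injective partner.
Proof. exact: inv_inj partnerK. Qed.

Lemma pm_blockE c x : c \in Q -> x \in c -> c = [set x; partner x].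
Proof. by move=> cQ xc; rewrite -pblock_pair (pm_pblockE cQ xc). Qed.

Lemma pm_transversalP (U : {set W}) :
  reflect (forall x, (x \in U) != (partner x \in U)) (pm_transversal U).
Proof.
apply: (iffP forall_inP) => [sU x | sepU c cQ].
  by rewrite -cards2I_eq1 ?(eq_sym x) ?partner_neq // -pblock_pair sU ?pm_pblock.
have [x xc] : exists x, x \in c by apply/set0Pn; rewrite -card_gt0 pm_card2.
by rewrite (pm_blockE cQ xc) cards2I_eq1 ?(eq_sym x) ?partner_neq.
Qed.

Lemma pm_transversalC (U : {set W}) : pm_transversal (~: U) = pm_transversal U.
Proof.
by apply/pm_transversalP/pm_transversalP => sepU x; have := sepU x;
  rewrite !inE; do 2!case: (_ \in U).
Qed.

End PerfectMatching.

Definition symdiff (T : finType) (A B : {set T}) : {set T} :=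
  [set x | (x \in A) != (x \in B)].

Lemma symdiffK (T : finType) (A B : {set T}) : symdiff A (symdiff A B) = B.
Proof. by apply/setP => x; rewrite !inE; case: (x \in A); case: (x \in B). Qed.

Lemma card_imset_eqker (I T1 T2 : finType) (i0 : I) (f : I -> T1) (g : I -> T2)
    (A : {pred I}) :
  (forall i j, (f i == f j) = (g i == g j)) -> #|f @: A| = #|g @: A|.
Proof.
move=> eq_fg.
pose h y := f (odflt i0 [pick i in A | g i == y]).
have hg i : i \in A -> h (g i) = f i.
  move=> iA; rewrite /h; case: pickP => [j /andP[_ /eqP gji]|none] /=.
    by apply/eqP; rewrite eq_fg gji.
  by have := none i; rewrite iA eqxx.
have -> : f @: A = h @: (g @: A).
  rewrite -imset_comp; apply/setP => y.
  by apply/imsetP/imsetP => -[i iA ->]; exists i; rewrite //= hg.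
apply: card_in_imset => _ _ /imsetP[i iA ->] /imsetP[j jA ->].
by rewrite !hg // => /eqP; rewrite eq_fg => /eqP.
Qed.

Section TwoMatchings.
Variables (W : finType) (Q1 Q2 : {set {set W}}).
Hypotheses (HQ1 : perfect_matching Q1) (HQ2 : perfect_matching Q2).

Local Notation e := (partner Q1).
Local Notation m := (partner Q2).
Local Notation r := (chord2_rel Q1 Q2).

Lemma chord2_relE x y : r x y = [|| y == x, y == e x | y == m x].
Proof.
apply/existsP/idP => [[c /andP[]]|].
  rewrite inE => /orP[] cQ /andP[xc].
    by rewrite (pm_blockE HQ2 cQ xc) !inE => /orP[] ->; rewrite ?orbT.
  by rewrite (pm_blockE HQ1 cQ xc) !inE => /orP[] ->; rewrite ?orbT.
case/or3P => /eqP ->.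
- by exists (pblock Q2 x); rewrite inE pm_pblock // pm_mem_pblock.
- by exists (pblock Q1 x); rewrite inE pm_pblock // ?orbT pm_mem_pblock // partner_in.
- by exists (pblock Q2 x); rewrite inE pm_pblock // pm_mem_pblock // partner_in.
Qed.

Lemma chord2_connect_sym : connect_sym r.
Proof.
apply: sym_connect_sym => x y.
by apply/existsP/existsP => -[c /andP[cQ /andP[xc yc]]]; exists c; rewrite cQ xc yc.
Qed.

Definition component (x : W) : {set W} := [set y | connect r x y].
Definition components : {set {set W}} := [set component x | x : W].

Lemma eq_component x y : (component x == component y) = connect r x y.
Proof.
apply/eqP/idP => [xy | /(same_connect chord2_connect_sym) xy].
  have : y \in component y by rewrite inE connect0.
  by rewrite -xy inE.
by apply/setP => z; rewrite !inE xy.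
Qed.

Lemma mem_cover_components (S : {set {set W}}) x : S \subset components ->
  (x \in cover S) = (component x \in S).
Proof.
move=> sS; apply/bigcupP/idP => [[K KS xK]|xS]; last first.
  by exists (component x); rewrite // inE connect0.
have /imsetP[z _ Kz] := subsetP sS K KS.
by move: xK KS; rewrite Kz inE -eq_component => /eqP ->.
Qed.

Lemma components_gt0 (x : W) : (0 < #|components|)%N.
Proof. by apply/card_gt0P; exists (component x); apply: imset_f. Qed.

Lemma c22_components : c22 Q1 Q2 = #|components|.
Proof.
congr #|pred_of_set _|; apply/setP => K; rewrite inE andb_idr // => _.
apply/forall_inP => x _.
have blocks_at Q : perfect_matching Q -> [set c in Q | x \in c] = [set pblock Q x].
  move=> HQ; apply/setP => c; rewrite !inE; apply/andP/eqP => [[cQ xc]|->].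
    by rewrite (pm_pblockE HQ cQ xc).
  by rewrite pm_pblock // pm_mem_pblock.
by rewrite (blocks_at _ HQ2) (blocks_at _ HQ1) !cards1.
Qed.

Definition common_transversal (U : {set W}) : bool :=
  pm_transversal Q1 U && pm_transversal Q2 U.

Lemma common_transversalC (U : {set W}) :
  common_transversal (~: U) = common_transversal U.
Proof. by rewrite /common_transversal !pm_transversalC. Qed.

Lemma common_transversal_closed (U C : {set W}) : common_transversal U ->
  closed r C -> common_transversal (symdiff U C).
Proof.
case/andP => /(pm_transversalP HQ1) sU1 /(pm_transversalP HQ2) sU2 closedC.
apply/andP; split; apply/pm_transversalP => // x; rewrite !inE.
  rewrite -(closedC x (e x)); last by rewrite chord2_relE eqxx orbT.
  by move: (sU1 x); case: (x \in U); case: (e x \in U); case: (x \in C).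
rewrite -(closedC x (m x)); last by rewrite chord2_relE eqxx !orbT.
by move: (sU2 x); case: (x \in U); case: (m x \in U); case: (x \in C).
Qed.

Lemma closed_symdiff (U U' : {set W}) : common_transversal U -> common_transversal U' ->
  closed r (symdiff U U').
Proof.
case/andP => /(pm_transversalP HQ1) sU1 /(pm_transversalP HQ2) sU2.
case/andP => /(pm_transversalP HQ1) sU1' /(pm_transversalP HQ2) sU2' x y.
rewrite chord2_relE !inE => /or3P[] /eqP -> //.
  by move: (sU1 x) (sU1' x); do 4!case: (_ \in _).
by move: (sU2 x) (sU2' x); do 4!case: (_ \in _).
Qed.

Lemma closed_cover_components (S : {set {set W}}) : S \subset components ->
  closed r (cover S).
Proof.
move=> sS x y rxy; rewrite !mem_cover_components //.
by congr (_ \in S); apply/eqP; rewrite eq_component connect1.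
Qed.

Lemma symdiff_cover_components (U U' : {set W}) :
  common_transversal U -> common_transversal U' ->
  symdiff U U' = cover [set component x | x in symdiff U U'].
Proof.
move=> tU tU'; apply/setP => x; apply/idP/bigcupP => [xs|[_ /imsetP[z zs ->]]].
  by exists (component x); [exact: imset_f | rewrite inE connect0].
by rewrite inE => /(closed_connect (closed_symdiff tU tU')) <-.
Qed.

Lemma cover_components_inj : {in powerset components &, injective cover}.
Proof.
move=> S1 S2; rewrite !inE => s1 s2 eq_cover; apply/setP => K.
have [/imsetP[z _ ->]|nK] := boolP (K \in components).
  by rewrite -!mem_cover_components ?eq_cover.
by apply/idP/idP => KS; [move: (subsetP s1 K KS) | move: (subsetP s2 K KS)];
  rewrite (negbTE nK).
Qed.

(* [partner2] moves two steps along a cycle of Q1 + Q2, so the [partner2]-orbit *)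
(* of [x] never reaches [e x], which is at odd distance from [x].              *)
Definition partner2 (x : W) : W := m (e x).

Lemma partner2_inj : injective partner2.
Proof. by move=> x y /(partner_inj HQ2) /(partner_inj HQ1). Qed.

Lemma iter_partner2_neq_partner n x : iter n partner2 x != e x.
Proof.
elim/ltn_ind: n x => [[|[|k]]] IH x /=.
- by rewrite eq_sym partner_neq.
- by rewrite /partner2 partner_neq.
apply/eqP => iter_eq.
have := IH k (leqnSn k.+1) (partner2 x); apply/negP/negPn/eqP.
have /(congr1 m) : m (e (iter k partner2 (partner2 x))) = e x by rewrite -iter_eq -iterSr.
by rewrite partnerK // => /(congr1 e); rewrite partnerK.
Qed.

Lemma froot_partner2 x : froot partner2 (partner2 x) = froot partner2 x.
Proof.
apply/esym/eqP; rewrite (root_connect (fconnect_sym partner2_inj)).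
exact: fconnect1.
Qed.

Lemma froot_partner_neq x : froot partner2 x != froot partner2 (e x).
Proof.
rewrite (root_connect (fconnect_sym partner2_inj)); apply/negP => /iter_findex iter_e.
by have := iter_partner2_neq_partner (findex partner2 x (e x)) x; rewrite iter_e eqxx.
Qed.

(* The [partner2]-orbits of [x] and [e x] are distinct and are exchanged by   *)
(* both [e] and [m], so comparing their ranks gives a proper 2-colouring.     *)
Definition root_colouring : {set W} :=
  [set x | (enum_rank (froot partner2 x) < enum_rank (froot partner2 (e x)))%N].

Lemma common_transversal_root_colouring : common_transversal root_colouring.
Proof.
have ltn_xor x : (enum_rank (froot partner2 x) < enum_rank (froot partner2 (e x)))%N !=
                 (enum_rank (froot partner2 (e x)) < enum_rank (froot partner2 x))%N.
  case: ltngtP => // /val_inj/enum_rank_inj/eqP.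
  by rewrite (negbTE (froot_partner_neq x)).
apply/andP; split; apply/pm_transversalP => // x; rewrite !inE.
  by rewrite (partnerK HQ1) ltn_xor.
have -> : froot partner2 (m x) = froot partner2 (e x).
  by rewrite -[in RHS]froot_partner2 /partner2 (partnerK HQ1).
have -> : froot partner2 (e (m x)) = froot partner2 x.
  by rewrite -[in LHS]froot_partner2 /partner2 (partnerK HQ1) (partnerK HQ2).
exact: ltn_xor.
Qed.

Lemma card_common_transversal :
  #|[set U | common_transversal U]| = (2 ^ #|components|)%N.
Proof.
have c0 := common_transversal_root_colouring.
rewrite -card_powerset.
have -> : [set U | common_transversal U] =
          [set symdiff root_colouring (cover S) | S in powerset components].
  apply/setP => U; rewrite inE; apply/idP/imsetP => [tU|[S]]; last first.
    by rewrite inE => sS ->; apply/common_transversal_closed/closed_cover_components.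
  exists [set component x | x in symdiff root_colouring U].
    by rewrite inE; apply/subsetP => K /imsetP[x _ ->]; apply: imset_f.
  by rewrite -symdiff_cover_components // symdiffK.
apply: card_in_imset => S1 S2 s1 s2 eqS; apply: cover_components_inj => //.
by rewrite -(symdiffK root_colouring (cover S1)) eqS symdiffK.
Qed.

End TwoMatchings.

Lemma reshape_index_cons_lt k ks t : (t < k)%N -> reshape_index (k :: ks) t = 0%N.
Proof. by rewrite /reshape_index /= subn_eq0 => ->. Qed.

Lemma reshape_index_cons_add k ks i :
  reshape_index (k :: ks) (k + i)%N = (reshape_index ks i).+1.
Proof. by rewrite /reshape_index /= subn_eq0 ltnNge leq_addr /= -addnS addKn. Qed.

Lemma det_block_diag (R : comNzRingType) n (ks : seq nat) (f : nat -> nat -> R) :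
  n = sumn ks ->
  (forall t t', (t < sumn ks)%N -> (t' < sumn ks)%N ->
     reshape_index ks t != reshape_index ks t' -> f t t' = 0) ->
  \det (\matrix_(i, j < n) f i j) =
  \prod_(j < size ks) \det (\matrix_(i, i' < nth 0%N ks j)
                              f (flatten_index ks j i) (flatten_index ks j i')).
Proof.
move=> ->; elim: ks f => [|k ks IH] f f0 /=; first by rewrite big_ord0 det_mx00.
set M := \matrix_(i, j < k + sumn ks) f i j.
rewrite -[M]submxK.
have -> : dlsubmx M = 0.
  apply/matrixP => i j; rewrite !mxE; apply: f0.
  - by rewrite /= ltn_add2l.
  - exact: ltn_addr (ltn_ord j).
  by rewrite /= reshape_index_cons_add reshape_index_cons_lt.
rewrite det_ublock big_ord_recl; congr (_ * _).
  by congr (\det _); apply/matrixP => i j; rewrite !mxE.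
have -> : drsubmx M = \matrix_(i, j < sumn ks) f (k + i)%N (k + j)%N.
  by apply/matrixP => i j; rewrite !mxE.
rewrite (IH (fun i j => f (k + i) (k + j))%N); last first.
  move=> t t' lt_t lt_t' neq_tt'; apply: f0; rewrite ?ltn_add2l //.
  by rewrite !reshape_index_cons_add eqSS.
apply: eq_bigr => j _; congr (\det _); apply/matrixP => i i'.
by rewrite !mxE /flatten_index /= -!addnA.
Qed.

Lemma nth_flatten_index (T : Type) (x0 : T) (ss : seq (seq T)) j i :
  (i < size (nth [::] ss j))%N ->
  nth x0 (flatten ss) (flatten_index (shape ss) j i) = nth x0 (nth [::] ss j) i.
Proof.
by move=> lt_i; rewrite nth_flatten flatten_indexKl ?flatten_indexKr // nth_shape.
Qed.

Lemma mem_nth_flatten (T : eqType) (x0 : T) (ss : seq (seq T)) t :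
  (t < size (flatten ss))%N ->
  nth x0 (flatten ss) t \in nth [::] ss (reshape_index (shape ss) t).
Proof.
rewrite size_flatten => lt_t; rewrite nth_flatten mem_nth // -nth_shape.
exact: reshape_offsetP.
Qed.

Lemma perm_flatten_filter (T : eqType) (s : seq T) (g : T -> nat) m :
  all (fun x => g x < m)%N s ->
  perm_eq (flatten [seq [seq x <- s | g x == j] | j <- iota 0 m]) s.
Proof.
move=> /allP lt_g; apply/seq.permP => p.
rewrite count_flatten sumnE !big_map -sum1_count.
under eq_bigr => j _ do rewrite count_filter -sum1_count big_mkcond.
rewrite exchange_big /= [RHS]big_mkcond; apply: eq_big_seq => x xs /=.
case: (p x) => /=; last by rewrite big1.
have -> : \sum_(j <- iota 0 m) (if g x == j then 1 else 0)%N =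
          count (pred1 (g x)) (iota 0 m).
  by rewrite -sum1_count [RHS]big_mkcond; apply: eq_bigr => j _ /=; rewrite eq_sym.
by rewrite count_uniq_mem ?iota_uniq // mem_iota add0n lt_g.
Qed.

Lemma perm_of_perm_eq_enum n (s : seq 'I_n) : perm_eq s (enum 'I_n) ->
  {sg : 'S_n | forall i : 'I_n, nth i s i = sg i}.
Proof.
move=> ps.
have sz : size s = n by rewrite (perm_size ps) size_enum_ord.
have us : uniq s by rewrite (perm_uniq ps) enum_uniq.
have inj : injective (fun i : 'I_n => nth i s i).
  move=> i j /eqP; rewrite (set_nth_default j) ?sz // nth_uniq ?sz //.
  by move/eqP/val_inj.
by exists (perm inj) => i; rewrite permE.
Qed.

Lemma seq_signE (R : nzRingType) n (s : seq 'I_n) (sg : 'S_n) :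
  (forall i : 'I_n, nth i s i = sg i) -> seq_sign R s = (-1) ^+ sg.
Proof.
move=> s_sg; rewrite /seq_sign; case: pickP => [sg' /forallP s_sg'|none].
  suff -> : sg' = sg by [].
  by apply/permP => i; rewrite -s_sg; apply/esym/eqP/s_sg'.
by have /forallP[] := negbT (none sg) => i; rewrite s_sg.
Qed.

Lemma det_row_col_perm (R : comNzRingType) n (s t : 'S_n) (A : 'M[R]_n) :
  \det (row_perm s (col_perm t A)) = (-1) ^+ s * (-1) ^+ t * \det A.
Proof.
rewrite row_permE col_permE !det_mulmx !det_perm odd_permV.
by rewrite (mulrC (\det A)) mulrA.
Qed.

Lemma size_filter_enum (T : finType) (p : pred T) :
  size [seq x <- enum T | p x] = #|[set x | p x]|.
Proof.
rewrite size_filter cardsE cardE /enum_mem -enumT /=.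
by rewrite count_filter size_filter; apply: eq_count => x /=; rewrite /in_mem /= andbT.
Qed.

Lemma index_eqE (T : eqType) (x0 x : T) (s : seq T) j : uniq s -> x \in s ->
  (j < size s)%N -> (index x s == j) = (x == nth x0 s j).
Proof.
move=> us xs js; apply/eqP/eqP => [<-|->]; first by rewrite nth_index.
exact: index_uniq.
Qed.

Section GroupedDeterminant.
Variables (R : comNzRingType) (n m : nat) (d : 'I_n).

Definition fiber (g : 'I_n -> nat) (j : nat) : seq 'I_n := [seq k <- enum 'I_n | g k == j].

Definition fibers (g : 'I_n -> nat) : seq (seq 'I_n) := [seq fiber g j | j <- iota 0 m].

Section Fibers.
Variable g : 'I_n -> nat.
Hypothesis g_lt : forall k, (g k < m)%N.

Lemma nth_fibers j : (j < m)%N -> nth [::] (fibers g) j = fiber g j.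
Proof. by move=> lt_j; rewrite (nth_map 0%N) ?size_iota // nth_iota. Qed.

Lemma size_shape_fibers : size (shape (fibers g)) = m.
Proof. by rewrite !size_map size_iota. Qed.

Lemma perm_flatten_fibers : perm_eq (flatten (fibers g)) (enum 'I_n).
Proof. by apply: perm_flatten_filter; apply/allP => k _. Qed.

Lemma size_flatten_fibers : size (flatten (fibers g)) = n.
Proof. by rewrite (perm_size perm_flatten_fibers) size_enum_ord. Qed.

Lemma nth_flatten_fibers t : (t < n)%N ->
  g (nth d (flatten (fibers g)) t) = reshape_index (shape (fibers g)) t.
Proof.
move=> lt_t; rewrite -[n in (t < n)%N]size_flatten_fibers in lt_t.
have lt_r : (reshape_index (shape (fibers g)) t < m)%N.
  by rewrite -size_shape_fibers reshape_indexP // -size_flatten.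
have := mem_nth_flatten d lt_t.
by rewrite nth_fibers // mem_filter => /andP[/eqP].
Qed.

End Fibers.

Lemma det_grouped (gr gc : 'I_n -> nat) (Z : 'M[R]_n) :
  (forall k, (gr k < m)%N) -> (forall k, (gc k < m)%N) ->
  (forall j, size (fiber gr j) = size (fiber gc j)) ->
  (forall k l, gr k != gc l -> Z k l = 0) ->
  \det Z = seq_sign R (flatten (fibers gr)) * seq_sign R (flatten (fibers gc)) *
    \prod_(j < m) \det (\matrix_(i, i' < size (fiber gr j))
                          Z (nth d (fiber gr j) i) (nth d (fiber gc j) i')).
Proof.
move=> gr_lt gc_lt size_fiber Z_off_diag.
have [sr rows_sr] := perm_of_perm_eq_enum (perm_flatten_fibers gr_lt).
have [sc cols_sc] := perm_of_perm_eq_enum (perm_flatten_fibers gc_lt).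
have shape_cols : shape (fibers gc) = shape (fibers gr).
  by rewrite /shape -!map_comp; apply: eq_map => j /=; rewrite size_fiber.
rewrite (seq_signE R rows_sr) (seq_signE R cols_sc).
have -> : \det Z = (-1) ^+ sr * (-1) ^+ sc * \det (row_perm sr (col_perm sc Z)).
  by rewrite det_row_col_perm mulrA mulrACA -!signr_addb !addbb !expr0 !mul1r.
congr (_ * _).
have -> : row_perm sr (col_perm sc Z) = \matrix_(i, j < n)
            Z (nth d (flatten (fibers gr)) i) (nth d (flatten (fibers gc)) j).
  apply/matrixP => i j; rewrite !mxE -rows_sr -cols_sc.
  rewrite (set_nth_default i d) ?(size_flatten_fibers gr_lt) //.
  by rewrite (set_nth_default j d) ?(size_flatten_fibers gc_lt).
rewrite (@det_block_diag _ _ (shape (fibers gr))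
  (fun t t' => Z (nth d (flatten (fibers gr)) t) (nth d (flatten (fibers gc)) t')));
  first last.
- move=> t t' lt_t lt_t' neq_tt'; apply: Z_off_diag.
  rewrite -size_flatten (size_flatten_fibers gr_lt) in lt_t lt_t'.
  by rewrite (nth_flatten_fibers gr_lt) // (nth_flatten_fibers gc_lt) // shape_cols.
- by rewrite -size_flatten (size_flatten_fibers gr_lt).
rewrite size_shape_fibers; apply: eq_bigr => j _.
rewrite nth_shape nth_fibers //; congr (\det _); apply/matrixP => i i'; rewrite !mxE.
rewrite nth_flatten_index; last by rewrite nth_fibers.
rewrite -shape_cols nth_flatten_index; last by rewrite nth_fibers // -size_fiber.
by rewrite !nth_fibers.
Qed.

End GroupedDeterminant.

Section ChordWeight.
Variables (W : finType) (R : comNzRingType) (X : W -> W -> R).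
Hypothesis X_sym : forall x y, X x y = X y x.

Definition chord_weight (c : {set W}) : R :=
  match [pick x in c] with
  | Some x => match [pick y in c :\ x] with Some y => X x y | None => 0 end
  | None => 0
  end.

Lemma chord_weight_pair x y : x != y -> chord_weight [set x; y] = X x y.
Proof.
move=> nxy; rewrite /chord_weight; case: pickP => [z|none]; last first.
  by have := none x; rewrite setU11.
rewrite !inE => /orP[] /eqP -> ; case: pickP => [w|none].
- by rewrite !inE => /andP[nwx /orP[]/eqP wE]; [move: nwx; rewrite wE eqxx | rewrite wE].
- by have := none y; rewrite !inE eq_sym nxy eqxx orbT.
- rewrite !inE => /andP[nwy /orP[]/eqP wE]; last by move: nwy; rewrite wE eqxx.
  by rewrite wE X_sym.
- by have := none x; rewrite !inE nxy eqxx.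
Qed.

End ChordWeight.

Section ChordDiagrams.
Variables (W : finType) (N : nat) (a b : 'I_N -> W) (E1 E2 : {set {set W}})
  (P : {set {set {set W}}}).

Definition restricted_diagram (M : {set {set W}}) : bool :=
  perfect_matching M && [forall c in M, [exists B in P, c \subset cover B]].

Definition part_of (x : W) : {set {set W}} := pblock P (pblock E1 x).

Hypotheses (HE1 : perfect_matching E1) (HE2 : perfect_matching E2)
  (Hab : E2 = [set [set a k; b k] | k : 'I_N])
  (Hab_inj : injective (fun k : 'I_N => [set a k; b k]))
  (HP : partition P E1) (HN : (0 < N)%N).

Local Notation e := (partner E2).

Lemma edge_mem k : [set a k; b k] \in E2.
Proof. by rewrite Hab; apply: imset_f. Qed.

Lemma edge_index_uniq k l x : x \in [set a k; b k] -> x \in [set a l; b l] -> k = l.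
Proof.
move=> xk xl; apply: Hab_inj => /=.
by rewrite -(pm_pblockE HE2 (edge_mem k) xk) -(pm_pblockE HE2 (edge_mem l) xl).
Qed.

Lemma partner_a k : e (a k) = b k.
Proof.
have := partner_in HE2 (a k).
rewrite (pm_pblockE HE2 (edge_mem k)) ?setU11 // !inE => /orP[/eqP aa|/eqP //].
by have := partner_neq HE2 (a k); rewrite aa eqxx.
Qed.

Definition edge_index (x : W) : 'I_N :=
  odflt (Ordinal HN) [pick k | x \in [set a k; b k]].

Lemma edge_indexP x : x \in [set a (edge_index x); b (edge_index x)].
Proof.
rewrite /edge_index; case: pickP => [k -> //|none].
have /imsetP[k _ xk] : pblock E2 x \in [set [set a k; b k] | k : 'I_N].
  by rewrite -Hab pm_pblock.
by have := none k; rewrite -xk pm_mem_pblock.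
Qed.

Lemma edge_indexE x k : x \in [set a k; b k] -> edge_index x = k.
Proof. exact: edge_index_uniq (edge_indexP x). Qed.

Lemma edge_index_a k : edge_index (a k) = k.
Proof. by apply: edge_indexE; rewrite setU11. Qed.

Section Transversal.
Variable U : {set W}.
Hypothesis HU : pm_transversal E2 U.

Local Notation uu := (uvert a b U).
Local Notation vv := (vvert a b U).

Lemma a_in_xor k : (a k \in U) != (b k \in U).
Proof. by rewrite -partner_a; apply/(pm_transversalP HE2). Qed.

Lemma uvert_in k : uu k \in U.
Proof.
rewrite /uvert; case: ifP => // aU.
by move: (a_in_xor k); rewrite aU; case: (b k \in U).
Qed.

Lemma vvert_notin k : vv k \notin U.
Proof.
rewrite /vvert; case: ifP => aU; last by rewrite aU.
by move: (a_in_xor k); rewrite aU; case: (b k \in U).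
Qed.

Lemma uvert_neq_vvert k l : uu k != vv l.
Proof. by apply: contraTneq (uvert_in k) => ->; apply: vvert_notin. Qed.

Lemma uvert_mem_edge k : uu k \in [set a k; b k].
Proof. by rewrite /uvert; case: ifP; rewrite !inE eqxx ?orbT. Qed.

Lemma vvert_mem_edge k : vv k \in [set a k; b k].
Proof. by rewrite /vvert; case: ifP; rewrite !inE eqxx ?orbT. Qed.

Lemma edge_index_uvert k : edge_index (uu k) = k.
Proof. exact/edge_indexE/uvert_mem_edge. Qed.

Lemma edge_index_vvert k : edge_index (vv k) = k.
Proof. exact/edge_indexE/vvert_mem_edge. Qed.

Lemma uvert_inj : injective uu.
Proof. exact: can_inj edge_index_uvert. Qed.

Lemma vvert_inj : injective vv.
Proof. exact: can_inj edge_index_vvert. Qed.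

Lemma uvert_edge_index x : x \in U -> uu (edge_index x) = x.
Proof.
move=> xU; have := edge_indexP x; have := a_in_xor (edge_index x).
by rewrite /uvert !inE => + /orP[] /eqP xe; rewrite -xe xU //; case: (a _ \in U).
Qed.

Lemma vvert_edge_index x : x \notin U -> vv (edge_index x) = x.
Proof.
move=> xU; have := edge_indexP x; have := a_in_xor (edge_index x).
rewrite /vvert !inE => + /orP[] /eqP xe; rewrite -xe (negbTE xU) //.
by case: (a _ \in U).
Qed.

Lemma card_transversal : #|U| = N.
Proof.
rewrite -[N]card_ord -(card_imset _ uvert_inj); congr #|pred_of_set _|.
apply/setP => x; apply/idP/imsetP => [xU|[k _ ->]]; last exact: uvert_in.
by exists (edge_index x); rewrite ?uvert_edge_index.
Qed.

Lemma card_transversalC : #|~: U| = N.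
Proof.
rewrite -[N]card_ord -(card_imset _ vvert_inj); congr #|pred_of_set _|.
apply/setP => x; rewrite inE; apply/idP/imsetP => [xU|[k _ ->]]; last exact: vvert_notin.
by exists (edge_index x); rewrite ?vvert_edge_index.
Qed.

End Transversal.

Lemma cover_parts : cover P = E1.
Proof. by case/and3P: HP => /eqP. Qed.

Lemma part_of_in x : part_of x \in P.
Proof. by apply: pblock_mem; rewrite cover_parts pm_pblock. Qed.

Lemma mem_cover_part B x : B \in P -> (x \in cover B) = (part_of x == B).
Proof.
move=> BP; have tP : trivIset P by case/and3P: HP.
apply/bigcupP/eqP => [[c cB xc]|<-].
  have cE1 : c \in E1 by rewrite -cover_parts; apply/bigcupP; exists B.
  by rewrite /part_of (pm_pblockE HE1 cE1 xc) (def_pblock tP BP cB).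
exists (pblock E1 x); last exact: pm_mem_pblock.
by rewrite /part_of mem_pblock cover_parts pm_pblock.
Qed.

Lemma part_of_partner M x : restricted_diagram M -> part_of (partner M x) = part_of x.
Proof.
case/andP => pM /forall_inP inM.
have /existsP[B /andP[BP /subsetP sB]] := inM _ (pm_pblock pM x).
have := sB _ (partner_in pM x); have := sB _ (pm_mem_pblock pM x).
by rewrite !mem_cover_part // => /eqP -> /eqP ->.
Qed.

Section PermutationDiagrams.
Variable U : {set W}.
Hypothesis HU : pm_transversal E2 U.

Local Notation uu := (uvert a b U).
Local Notation vv := (vvert a b U).

Definition part_preserving (s : 'S_N) : bool :=
  [forall k, part_of (uu k) == part_of (vv (s k))].

Definition chord_of (s : 'S_N) (k : 'I_N) : {set W} := [set uu k; vv (s k)].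
Definition diagram_of (s : 'S_N) : {set {set W}} := [set chord_of s k | k : 'I_N].

Lemma uvert_in_chord s k l : (uu k \in chord_of s l) = (k == l).
Proof.
rewrite !inE (negbTE (uvert_neq_vvert HU _ _)) orbF.
exact: (inj_eq (@uvert_inj U)).
Qed.

Lemma vvert_in_chord s k l : (vv k \in chord_of s l) = (k == s l).
Proof.
rewrite !inE eq_sym (negbTE (uvert_neq_vvert HU _ _)) /=.
exact: (inj_eq (@vvert_inj U)).
Qed.

Lemma chord_of_inj s : injective (chord_of s).
Proof. by move=> k l kl; apply/eqP; rewrite -(uvert_in_chord s) -kl setU11. Qed.

Lemma diagram_of_inj : injective diagram_of.
Proof.
move=> s1 s2 eq_s; apply/permP => k.
have /imsetP[l _ kl] : chord_of s1 k \in diagram_of s2 by rewrite -eq_s imset_f.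
have /eqP lk : k == l by rewrite -(uvert_in_chord s2) -kl setU11.
by subst l; apply/eqP; rewrite -(vvert_in_chord s2) -kl !inE eqxx orbT.
Qed.

Lemma diagram_of_pm s : perfect_matching (diagram_of s).
Proof.
apply/andP; split; last first.
  by apply/forall_inP => c /imsetP[k _ ->]; rewrite cards2 uvert_neq_vvert.
apply/and3P; split.
- apply/eqP/setP => x; rewrite inE; apply/bigcupP.
  have [xU|xU] := boolP (x \in U).
    exists (chord_of s (edge_index x)); first exact: imset_f.
    by rewrite /chord_of (uvert_edge_index HU xU) setU11.
  exists (chord_of s (s^-1 (edge_index x))%g); first exact: imset_f.
  by rewrite /chord_of permKV (vvert_edge_index HU xU) !inE eqxx orbT.
- apply/trivIsetP => _ _ /imsetP[k _ ->] /imsetP[l _ ->] nkl.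
  have {}nkl : k != l by apply: contraNneq nkl => ->.
  rewrite -setI_eq0; apply/eqP/setP => z; rewrite in_setI in_set0.
  apply/negP => /andP[/set2P[]-> ].
    by rewrite uvert_in_chord (negbTE nkl).
  by rewrite vvert_in_chord (inj_eq (@perm_inj _ s)) (negbTE nkl).
- by apply/imsetP => -[k _ k0]; have := uvert_in_chord s k k; rewrite -k0 inE eqxx.
Qed.

Lemma diagram_of_transversal s : pm_transversal (diagram_of s) U.
Proof.
apply/forall_inP => c /imsetP[k _ ->].
by rewrite cards2I_eq1 ?uvert_neq_vvert // uvert_in // (negbTE (vvert_notin HU _)).
Qed.

Lemma diagram_of_restricted s : part_preserving s -> restricted_diagram (diagram_of s).
Proof.
move=> /forallP s_pp; rewrite /restricted_diagram diagram_of_pm.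
apply/forall_inP => c /imsetP[k _ ->]; apply/existsP; exists (part_of (uu k)).
rewrite part_of_in subUset !sub1set !mem_cover_part ?part_of_in //.
by rewrite eqxx eq_sym s_pp.
Qed.

Lemma diagram_ofP M : restricted_diagram M -> pm_transversal M U ->
  exists2 s, part_preserving s & M = diagram_of s.
Proof.
move=> rM /(pm_transversalP (proj1 (andP rM))) sepM; have pM := proj1 (andP rM).
have partner_notin k : partner M (uu k) \notin U.
  by have := sepM (uu k); rewrite uvert_in //; case: (_ \in U).
pose t k := edge_index (partner M (uu k)).
have vvert_t k : vv (t k) = partner M (uu k) by rewrite vvert_edge_index.
have t_inj : injective t.
  by move=> k l tkl; apply/(@uvert_inj U)/(partner_inj pM); rewrite -!vvert_t tkl.
exists (perm t_inj).
  by apply/forallP => k; rewrite permE vvert_t part_of_partner.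
have chordE k : chord_of (perm t_inj) k = pblock M (uu k).
  by rewrite /chord_of permE vvert_t pblock_pair.
apply/setP => c; apply/idP/imsetP => [cM|[k _ ->]]; last by rewrite chordE pm_pblock.
have [x xc] : exists x, x \in c by apply/set0Pn; rewrite -card_gt0 (pm_card2 pM cM).
have [xU|xU] := boolP (x \in U).
  by exists (edge_index x); rewrite // chordE uvert_edge_index // (pm_pblockE pM cM xc).
have partner_in_U : partner M x \in U.
  by have := sepM x; rewrite (negbTE xU); case: (_ \in U).
exists (edge_index (partner M x)) => //.
by rewrite chordE uvert_edge_index // (pblock_partner pM) (pm_pblockE pM cM xc).
Qed.

Section Cycles.
Variable s : 'S_N.
Local Notation r := (chord2_rel E2 (diagram_of s)).

Lemma chord2_rel_in c x y : c \in diagram_of s :|: E2 -> x \in c -> y \in c -> r x y.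
Proof. by move=> cin xc yc; apply/existsP; exists c; rewrite cin xc yc. Qed.

Lemma chord2_rel_edge k x y : x \in [set a k; b k] -> y \in [set a k; b k] -> r x y.
Proof. by apply: chord2_rel_in; rewrite inE edge_mem orbT. Qed.

Lemma connect_a_perm k : connect r (a k) (a (s k)).
Proof.
apply: (@connect_trans _ _ (uu k)).
  by apply/connect1/(@chord2_rel_edge k); rewrite ?setU11 ?uvert_mem_edge.
apply: (@connect_trans _ _ (vv (s k))).
  by apply/connect1/(chord2_rel_in (c := chord_of s k)); rewrite ?inE ?imset_f ?eqxx ?orbT.
by apply/connect1/(@chord2_rel_edge (s k)); rewrite ?setU11 ?vvert_mem_edge.
Qed.

Lemma porbit_chord2 x y : r x y -> porbit s (edge_index x) = porbit s (edge_index y).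
Proof.
case/existsP => c /andP[]; rewrite inE Hab => /orP[] /imsetP[k _ ->] /andP[xc yc].
  have porbit_s : porbit s (s k) = porbit s k by have := porbit_perm s 1 k; rewrite expg1.
  move: xc yc; rewrite !inE => /orP[]/eqP-> /orP[]/eqP->;
  by rewrite ?edge_index_uvert ?edge_index_vvert ?porbit_s.
by rewrite (edge_indexE xc) (edge_indexE yc).
Qed.

Lemma eq_porbit_connect i j : (porbit s i == porbit s j) = connect r (a i) (a j).
Proof.
apply/idP/idP.
  rewrite eq_porbit_mem porbit_sym => /porbitP[n ->]; rewrite permX.
  elim: n => [|n IH] /=; first exact: connect0.
  exact: connect_trans IH (connect_a_perm _).
pose C := [pred x | porbit s (edge_index x) == porbit s i].
have closedC : closed r C by move=> x y /porbit_chord2 xy; rewrite !inE xy.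
by move/(closed_connect closedC); rewrite !inE !edge_index_a eqxx eq_sym => <-.
Qed.

Lemma card_porbits_components : #|porbits s| = #|components E2 (diagram_of s)|.
Proof.
have -> : components E2 (diagram_of s) = [set component E2 (diagram_of s) (a k) | k : 'I_N].
  apply/setP => K; apply/imsetP/imsetP => [[x _ ->]|[k _ ->]]; last by exists (a k).
  exists (edge_index x) => //; apply/eqP; rewrite eq_component //.
  by apply/connect1/(@chord2_rel_edge (edge_index x)); rewrite ?edge_indexP ?setU11.
apply: (card_imset_eqker (Ordinal HN)) => i j.
by rewrite eq_component eq_porbit_connect.
Qed.

End Cycles.

Lemma restricted_transversalE :
  [set M | restricted_diagram M && pm_transversal M U] =
  diagram_of @: [set s | part_preserving s].
Proof.
apply/setP => M; rewrite inE; apply/andP/imsetP => [[rM tM]|[s]].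
  by have [s s_pp ->] := diagram_ofP rM tM; exists s; rewrite ?inE.
by rewrite inE => s_pp ->; rewrite diagram_of_restricted ?diagram_of_transversal.
Qed.

End PermutationDiagrams.

Section MixedMatrix.
Variables (R : comNzRingType) (X : W -> W -> R).
Hypothesis X_sym : forall x y, X x y = X y x.
Variable U : {set W}.
Hypothesis HU : pm_transversal E2 U.

Local Notation uu := (uvert a b U).
Local Notation vv := (vvert a b U).

Definition mixed_matrix : 'M[R]_N :=
  \matrix_(k, l) if part_of (uu k) == part_of (vv l) then X (uu k) (vv l) else 0.

Lemma det_mixed_matrix : \det mixed_matrix =
  \sum_(M | restricted_diagram M && pm_transversal M U)
     (-1) ^+ (N + #|components E2 M|) * \prod_(c in M) chord_weight X c.
Proof.
rewrite /determinant (bigID (part_preserving U)) /= [X in _ + X]big1 ?addr0; last first.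
  move=> s /forallPn[k nk]; rewrite (bigD1 k) //= mxE (negbTE nk) mul0r.
  by rewrite mulr0.
rewrite (eq_bigl (mem [set M | restricted_diagram M && pm_transversal M U])); last first.
  by move=> M; rewrite !inE.
rewrite (restricted_transversalE HU) big_imset /=; last first.
  by move=> s1 s2 _ _; apply: (diagram_of_inj HU).
apply: eq_big => [s|s s_pp]; first by rewrite inE.
rewrite /diagram_of big_imset /=; last by move=> k l _ _; apply: (chord_of_inj HU).
rewrite -(card_porbits_components U).
have -> : (-1) ^+ (N + #|porbits s|) = (-1) ^+ s :> R.
  by rewrite -signr_odd oddD /odd_perm card_ord.
congr (_ * _); apply: eq_bigr => k _.
by rewrite mxE (eqP (forallP s_pp k)) eqxx chord_weight_pair ?uvert_neq_vvert.
Qed.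

End MixedMatrix.

Section PartIndex.
Variable f : 'I_N -> W.

Definition part_index (k : 'I_N) : nat := index (part_of (f k)) (enum P).

Lemma part_index_lt k : (part_index k < #|P|)%N.
Proof. by rewrite cardE index_mem mem_enum part_of_in. Qed.

Lemma fiber_part_index j : (j < #|P|)%N ->
  fiber part_index j = [seq k <- enum 'I_N | f k \in cover (nth set0 (enum P) j)].
Proof.
move=> lt_j; have nthP : nth set0 (enum P) j \in P by rewrite -mem_enum mem_nth -?cardE.
apply: eq_filter => k; rewrite mem_cover_part //.
by rewrite (index_eqE set0) ?enum_uniq ?mem_enum ?part_of_in -?cardE.
Qed.

Lemma fiber_part_index_ge j : (#|P| <= j)%N -> fiber part_index j = [::].
Proof.
move=> le_j; apply/eqP; rewrite -size_eq0 size_filter.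
rewrite -(eq_count (a1 := pred0)) ?count_pred0 // => k /=.
by apply/esym/negbTE; rewrite neq_ltn (leq_trans (part_index_lt k)).
Qed.

Lemma map_enum_parts (F : {set {set W}} -> seq 'I_N) :
  (forall B, B \in P -> F B = [seq k <- enum 'I_N | f k \in cover B]) ->
  [seq F B | B <- enum P] = [seq fiber part_index j | j <- iota 0 #|P|].
Proof.
move=> FE; rewrite -{1}(mkseq_nth set0 (enum P)) -cardE /mkseq -map_comp.
apply/eq_in_map => j; rewrite mem_iota add0n => /andP[_ lt_j] /=.
by rewrite fiber_part_index // FE // -mem_enum mem_nth -?cardE.
Qed.

End PartIndex.

Section BlockExpansion.
Variables (R : fieldType) (X : W -> W -> R) (d : 'I_N).
Hypothesis X_sym : forall x y, X x y = X y x.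
Variable U : {set W}.
Hypothesis HU : pm_transversal E2 U.

Local Notation uu := (uvert a b U).
Local Notation vv := (vvert a b U).
Local Notation upos := (upos a b U).
Local Notation vpos := (vpos a b U).

Definition block_det (B : {set {set W}}) : R :=
  \det (\matrix_(i, j < size (upos B)) X (uu (nth d (upos B) i)) (vv (nth d (vpos B) j))).

Lemma size_upos B : B \in P -> size (upos B) = #|[set k | part_of (uu k) == B]|.
Proof.
move=> BP; rewrite size_filter_enum; congr #|pred_of_set _|.
by apply/setP => k; rewrite !inE mem_cover_part.
Qed.

Lemma size_vpos B : B \in P -> size (vpos B) = #|[set k | part_of (vv k) == B]|.
Proof.
move=> BP; rewrite size_filter_enum; congr #|pred_of_set _|.
by apply/setP => k; rewrite !inE mem_cover_part.
Qed.

Lemma sum_size_upos : (\sum_(B in P) size (upos B))%N = N.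
Proof.
rewrite (eq_bigr (fun B => \sum_(k : 'I_N | part_of (uu k) == B) 1)%N); last first.
  by move=> B BP; rewrite size_upos // -sum1_card; apply: eq_bigl => k; rewrite inE.
rewrite (exchange_big_dep predT) //= -[RHS]card_ord -sum1_card.
apply: eq_bigr => k _; rewrite (big_pred1 (part_of (uu k))) // => B /=.
by rewrite eq_sym andb_idl // => /eqP ->; apply: part_of_in.
Qed.

Lemma size_upos_vpos M B : restricted_diagram M -> pm_transversal M U -> B \in P ->
  size (upos B) = size (vpos B).
Proof.
move=> rM tM BP; have [s /forallP s_pp _] := diagram_ofP HU rM tM.
rewrite size_upos // size_vpos // -(card_imset _ (@perm_inj _ s)).
congr #|pred_of_set _|; apply/setP => l; rewrite [RHS]inE.
apply/imsetP/idP => [[k] | lB]; first by rewrite inE (eqP (s_pp k)) => + ->.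
by exists (s^-1 l)%g; rewrite ?permKV // inE (eqP (s_pp _)) permKV.
Qed.

Lemma sgn_prod_block_det : (forall B, B \in P -> size (upos B) = size (vpos B)) ->
  seq_sign R (flatten [seq upos B | B <- enum P]) *
  seq_sign R (flatten [seq vpos B | B <- enum P]) *
  \prod_(B in P) block_det B = \det (mixed_matrix X U).
Proof.
move=> size_eq.
have nthP j : (j < #|P|)%N -> nth set0 (enum P) j \in P.
  by move=> lt_j; rewrite -mem_enum mem_nth -?cardE.
have size_fiber j : size (fiber (part_index uu) j) = size (fiber (part_index vv) j).
  have [lt_j|ge_j] := ltnP j #|P|; last by rewrite !fiber_part_index_ge.
  by rewrite !fiber_part_index // -[LHS]/(size (upos _)) size_eq ?nthP.
have off_diag k l : part_index uu k != part_index vv l -> mixed_matrix X U k l = 0.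
  by rewrite mxE; case: ifP => // /eqP eq_part; rewrite /part_index eq_part eqxx.
rewrite (det_grouped d (@part_index_lt _) (@part_index_lt _) size_fiber off_diag).
rewrite (@map_enum_parts uu upos) // (@map_enum_parts vv vpos) //; congr (_ * _).
rewrite -big_enum (big_nth set0) -cardE big_mkord; apply: eq_bigr => j _.
rewrite /block_det !fiber_part_index //; congr (\det _); apply/matrixP => i i'.
set B := nth set0 (enum P) j; have BP : B \in P by apply: nthP.
have : nth d (upos B) i \in upos B by rewrite mem_nth.
have : nth d (vpos B) i' \in vpos B by rewrite mem_nth // -size_eq.
rewrite !mem_filter => /andP[+ _] /andP[+ _].
by rewrite !mxE !mem_cover_part // => /eqP -> /eqP ->; rewrite eqxx.
Qed.

Variable Psi : R.
Hypothesis Psi_neq0 : Psi != 0.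

(* [sgnE] vanishes unless every part carries as many u- as v-letters, so [F] *)
(* need only match the block expression in that case.                       *)
Lemma sgnE_prod_expansion (F : {set {set W}} -> R) :
  (forall B, B \in P -> size (upos B) = size (vpos B) ->
     F B = Psi ^ (1 - (size (upos B))%:Z) * block_det B) ->
  sgnE a b R P U * \prod_(B in P) F B =
  Psi ^ ((#|P|)%:Z - N%:Z) *
  \sum_(M | restricted_diagram M && pm_transversal M U)
     (-1) ^+ (N + #|components E2 M|) * \prod_(c in M) chord_weight X c.
Proof.
move=> FE; rewrite /sgnE; case: ifP => [/forall_inP size_eq|size_neq]; last first.
  rewrite mul0r big1 ?mulr0 // => M /andP[rM tM].
  case/negP: size_neq; apply/forall_inP => B BP; apply/eqP.
  exact: size_upos_vpos rM tM BP.
rewrite (eq_bigr _ (fun B BP => FE B BP (eqP (size_eq B BP)))) big_split /=.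
rewrite -(det_mixed_matrix X_sym HU) -sgn_prod_block_det; last first.
  by move=> B BP; apply/eqP/size_eq.
rewrite -(big_morph (fun z : int => Psi ^ z) (fun x y => expfzDr x y Psi_neq0) (expr0z Psi)).
have -> : (\sum_(B in P) (1 - (size (upos B))%:Z) = (#|P|)%:Z - N%:Z)%R.
  rewrite sumrB sumr_const -[in RHS]sum_size_upos.
  by rewrite -(big_morph (fun n : nat => n%:Z) (fun x y => PoszD x y) (erefl 0%:Z)) natz.
by rewrite mulrCA mulrA.
Qed.

End BlockExpansion.

Lemma P2_mem U : pm_transversal E2 U -> [set U; ~: U] \in P2 N E2.
Proof.
move=> HU; rewrite inE; apply/existsP; exists U.
by rewrite eqxx -/(pm_transversal E2 U) HU card_transversal // card_transversalC // eqxx.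
Qed.

Section PairRepresentative.
Variable p : {set {set W}}.
Hypothesis pP2 : p \in P2 N E2.

Lemma P2_pairE : p = [set pair_U p; ~: pair_U p] /\ pm_transversal E2 (pair_U p).
Proof.
have := pP2; rewrite inE => /existsP[U /and4P[/eqP pE _ _ HU]].
have : pair_U p \in p.
  by rewrite /pair_U; case: pickP => [X -> //|none]; have := none U; rewrite pE setU11.
rewrite pE !inE => /orP[]/eqP ->; first by [].
by rewrite setCK setUC pm_transversalC.
Qed.

End PairRepresentative.

Section CountPairs.
Variable M : {set {set W}}.
Hypothesis HM : perfect_matching M.

Let good := [set U | common_transversal E2 M U].
Let rooted := [set U : {set W} | a (Ordinal HN) \in U].

Lemma card_common_transversal_rooted : #|good| = (2 * #|good :&: rooted|)%N.
Proof.
suff halvesC : #|good :\: rooted| = #|good :&: rooted|.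
  by rewrite -(cardsID rooted good) halvesC addnn -mul2n.
rewrite -(card_imset _ (@setC_inj W)); congr #|pred_of_set _|.
apply/setP => U; rewrite !inE; apply/imsetP/andP => [[V]|[gU rU]].
  by rewrite !inE => /andP[rV gV] ->; rewrite common_transversalC ?inE.
by exists (~: U); rewrite ?setCK // !inE common_transversalC ?gU ?rU.
Qed.

Lemma P2_transversalE : [set p in P2 N E2 | pm_transversal M (pair_U p)] =
  (fun U => [set U; ~: U]) @: (good :&: rooted).
Proof.
apply/setP => p; rewrite inE; apply/andP/imsetP => [[pP2 tM]|[U]].
  have [pE tE2] := P2_pairE pP2.
  have gU : common_transversal E2 M (pair_U p) by rewrite /common_transversal tE2 tM.
  have [rU|rU] := boolP (a (Ordinal HN) \in pair_U p).
    by exists (pair_U p); rewrite // !inE gU.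
  exists (~: pair_U p); first by rewrite !inE common_transversalC ?gU.
  by rewrite setCK setUC {1}pE.
move=> /setIP[]; rewrite inE /common_transversal => /andP[tE2 tM] _ ->.
split; first exact: P2_mem.
have [+ _] := P2_pairE (P2_mem tE2); set V := pair_U _ => UE.
have : V \in [set U; ~: U] by rewrite UE setU11.
by rewrite !inE => /orP[]/eqP ->; rewrite ?pm_transversalC.
Qed.

Lemma card_P2_transversal :
  #|[set p in P2 N E2 | pm_transversal M (pair_U p)]| = (2 ^ (#|components E2 M| - 1))%N.
Proof.
rewrite P2_transversalE card_in_imset; last first.
  move=> U V; rewrite !inE => /andP[_ rU] /andP[_ rV] eqUV.
  have : U \in [set V; ~: V] by rewrite -eqUV setU11.
  by rewrite !inE => /orP[]/eqP // UV; move: rU; rewrite UV inE rV.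
move: (card_common_transversal HE2 HM); rewrite card_common_transversal_rooted.
case: #|components E2 M| => [|c] /=; first by move/eqP; rewrite muln_eq1.
by rewrite expnS subn1 /= => /eqP; rewrite eqn_mul2l => /eqP.
Qed.

End CountPairs.

End ChordDiagrams.

Lemma cyclepoly_sym (V E : finType) (src tgt : E -> V) (R : comNzRingType)
    (alpha : E -> R) e f :
  cyclepoly src tgt alpha e f = cyclepoly src tgt alpha f e.
Proof. by apply: eq_bigr => C _; rewrite -!mulrA [_ * (_ * _)]mulrCA. Qed.

Lemma dodgson_block_det (V E : finType) (src tgt : E -> V) (R : fieldType)
    (alpha : E -> R) (W : finType) (lab : W -> E) N (a b : 'I_N -> W) (d : 'I_N)
    (U : {set W}) (B : {set {set W}}) :
  size (upos a b U B) = size (vpos a b U B) ->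
  dodgson src tgt alpha [seq lab (uvert a b U k) | k <- upos a b U B]
                        [seq lab (vvert a b U k) | k <- vpos a b U B] =
  Psi src tgt alpha ^ (1 - (size (upos a b U B))%:Z) *
  block_det a b (fun x y => cyclepoly src tgt alpha (lab x) (lab y)) d U B.
Proof.
move=> size_eq; rewrite /dodgson size_map; congr (_ * _).
congr (\det _); apply/matrixP => i j; rewrite !mxE.
have lt_j : (j < size (vpos a b U B))%N by rewrite -size_eq.
by rewrite !(nth_map (lab (a d))) ?size_map // !(nth_map d).
Qed.

Lemma matching_coefficientE (R : fieldType) (Ps x : R) (m N c : nat) :
  Ps != 0 -> (0 < N)%N -> (0 < c)%N ->
  Ps ^ (m%:Z - N%:Z) * ((-1) ^+ (N + c) * x *+ (2 ^ (c - 1))%N) =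
  (-1) ^ (1 - m%:Z) * (- Ps) ^ (m%:Z - N%:Z) * ((-2) ^ (c%:Z - 1) * x).
Proof.
move=> Ps_neq0; case: N => // n _; case: c => // c _.
set z := (m%:Z - n.+1%:Z).
have u1 : (-1 : R) \is a GRing.unit by rewrite unitrN1.
have uPs : Ps \is a GRing.unit by rewrite unitfE.
rewrite -[- Ps]mulN1r (exprzMl _ u1 uPs) (mulrA ((-1) ^ (1 - m%:Z))) -(exprzDr u1).
have -> : 1 - m%:Z + z = - n%:Z.
  by rewrite /z addrA subrK intS opprD addrA subrr add0r.
rewrite -exprz_inv invrN1.
have -> : c.+1%:Z - 1 = c%:Z by rewrite -addn1 PoszD addrK.
rewrite -mulr_natr natrX -[- 2]mulN1r.
set pz := Ps ^ z.
rewrite /exprz /= subn1 /= addSn addnS !exprS exprD exprMn.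
ring.
Qed.

Theorem mainTheorem4
  (V E : finType) (src tgt : E -> V)
  (Hconn : connected_graph src tgt)
  (N : nat) (HN : betti1 src tgt = N) (HN1 : (1 <= N)%N)
  (R : fieldType) (alpha : E -> R) (HPsi : Psi src tgt alpha != 0)
  (W : finType) (HW : #|W| = (2 * N)%N)
  (lab : W -> E) (Hlab : injective lab)
  (E1 E2 : {set {set W}})
  (HE1 : perfect_matching E1) (HE2 : perfect_matching E2)
  (a b : 'I_N -> W)
  (Hab : E2 = [set [set a k; b k] | k : 'I_N])
  (Hab_inj : injective (fun k : 'I_N => [set a k; b k]))
  (P : {set {set {set W}}}) (HP : partition P E1) :
  \sum_(p in P2 N E2)
     sgnE a b R P (pair_U p) *
     \prod_(B in P)
        dodgson src tgt alpha
          [seq lab (uvert a b (pair_U p) k) | k <- upos a b (pair_U p) B]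
          [seq lab (vvert a b (pair_U p) k) | k <- vpos a b (pair_U p) B]
  =
  (-1) ^ (1 - (#|P|)%:Z) * (- Psi src tgt alpha) ^ ((#|P|)%:Z - N%:Z) *
  \sum_(M : {set {set W}} | perfect_matching M &&
                            [forall c in M, [exists B in P, c \subset cover B]])
     (-2) ^ ((c22 E2 M)%:Z - 1) *
     \prod_(c in M) chord_chi src tgt alpha lab c.
Proof.
pose X x y := cyclepoly src tgt alpha (lab x) (lab y).
have X_sym x y : X x y = X y x by apply: cyclepoly_sym.
pose d := Ordinal HN1.
rewrite (eq_bigr (fun p => Psi src tgt alpha ^ (#|P|%:Z - N%:Z) *
   \sum_(M | restricted_diagram P M && pm_transversal M (pair_U p))
      (-1) ^+ (N + #|components E2 M|) * \prod_(c in M) chord_weight X c)); last first.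
  move=> p pP2; have [_ tU] := P2_pairE HE2 pP2.
  apply: (sgnE_prod_expansion HE1 HE2 Hab Hab_inj HP HN1 X_sym (d := d) tU HPsi).
  by move=> B _; apply: dodgson_block_det.
rewrite -mulr_sumr (exchange_big_dep (restricted_diagram P)) /=; last first.
  by move=> p M _ /andP[].
rewrite !mulr_sumr; apply: eq_big => [M //|M rM].
have pM : perfect_matching M by case/andP: rM.
rewrite (eq_bigl (mem [set p in P2 N E2 | pm_transversal M (pair_U p)])); last first.
  by move=> p; rewrite !inE rM.
rewrite sumr_const (card_P2_transversal HE2 Hab Hab_inj HN1 pM) (c22_components HE2 pM).
exact: matching_coefficientE (components_gt0 E2 M (a d)).
Qed.
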